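(* For all $n\geq 1$, \[2\bar{a}_2(n)=\bar{p}(2n,n).\]
   Context: An overpartition of $n$ is a partition of $n$ in which the first occurrence of each distinct part value may be overlined. $\bar{a}_2(n)$ is the number of overpartitions of $n$ in which the smallest part value occurs at least twice, where an overlined part and a non-overlined part of the same value count as equal. $\bar{p}(N,t)$ is the number of overpartitions of $N$ in which the largest part minus the smallest part equals $t$. *)

From mathcomp Require Import all_boot.
Set Implicit Arguments. Unset Strict Implicit. Unset Printing Implicit Defensive.

(* An overpartition of N is encoded by its multiplicity function
   m : value -> number of occurrences (values and multiplicities range over
   0..N), together with the set O of part values whose first occurrence is
   overlined. *)
Definition opart (N : nat) : finType :=
  ({ffun 'I_N.+1 -> 'I_N.+1} * {set 'I_N.+1})%type.

Definition is_overpartition (N : nat) (x : opart N) : bool :=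
  [&& x.1 ord0 == ord0 :> 'I_N.+1,
      \sum_(v : 'I_N.+1) (v : nat) * x.1 v == N
    & [forall v, (v \in x.2) ==> (0 < x.1 v)]].

(* v is the smallest (resp. largest) part value of x
   (multiplicity counts overlined and non-overlined copies together). *)
Definition is_smallest (N : nat) (x : opart N) (v : 'I_N.+1) : bool :=
  (0 < x.1 v) && [forall u, (0 < x.1 u) ==> (v <= u)].

Definition is_largest (N : nat) (x : opart N) (v : 'I_N.+1) : bool :=
  (0 < x.1 v) && [forall u, (0 < x.1 u) ==> (u <= v)].

Definition abar2 (n : nat) : nat :=
  #|[set x : opart n | is_overpartition x &&
      [exists v, is_smallest x v && (2 <= x.1 v)]]|.

Definition pbar (N t : nat) : nat :=
  #|[set x : opart N | is_overpartition x &&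
      [exists s, exists l, [&& is_smallest x s, is_largest x l & (l - s == t)]]]|.

(* Let x be an overpartition of N whose smallest part s occurs at least twice,
   and let t >= N.  Moving one copy of s to a new part s + t, overlined or not,
   gives an overpartition of N + t with smallest part s and largest part
   s + t, since every part of x is at most N < s + t.  Conversely, moving the
   largest part s + t of such an overpartition back to s gives an
   overpartition of N whose smallest part s now occurs at least twice; the
   overline of s + t is the extra bit.  The two maps are mutually inverse, so
   2 abar2(N) = pbar(N + t, t), and t = N gives the theorem. *)

From mathcomp Require Import all_boot zify.
Set Implicit Arguments. Unset Strict Implicit. Unset Printing Implicit Defensive.

Lemma card_in_bij (T U : finType) (A : {set T}) (B : {set U})
    (f : T -> U) (g : U -> T) :
  {in A, forall x, f x \in B /\ g (f x) = x} ->
  {in B, forall y, g y \in A /\ f (g y) = y} -> #|A| = #|B|.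
Proof.
move=> fP gP; have /card_in_imset <- : {in A &, injective f}.
  by move=> x1 x2 /fP [_ fK1] /fP [_ fK2] e; rewrite -fK1 e fK2.
apply: eq_card => y; apply/imsetP/idP => [[x /fP [fx _] ->] // | /gP [gy gyK]].
by exists (g y).
Qed.

Definition weight (K : nat) (m : nat -> nat) : nat := \sum_(v < K) v * m v.

(* [m : nat -> nat] counts the copies of each part; [move_part a b m] moves one
   copy of a to b and is only meaningful when [0 < m a] (truncated subtraction). *)
Definition move_part (a b : nat) (m : nat -> nat) (v : nat) : nat :=
  m v + (v == b) - (v == a).

Definition least_part (m : nat -> nat) (s : nat) : Prop :=
  0 < m s /\ forall u, 0 < m u -> s <= u.

Definition greatest_part (m : nat -> nat) (l : nat) : Prop :=
  0 < m l /\ forall u, 0 < m u -> u <= l.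

Definition is_opart (N : nat) (m : nat -> nat) (o : nat -> bool) : Prop :=
  [/\ m 0 = 0, forall v, N < v -> m v = 0, weight N.+1 m = N
    & forall v, o v -> 0 < m v].

Lemma leq_part_weight K m v : v < K -> v * m v <= weight K m.
Proof. by move=> vK; rewrite /weight (bigD1 (Ordinal vK)) //= leq_addr. Qed.

Lemma weight_widen K1 K2 m : K1 <= K2 -> (forall v, K1 <= v -> m v = 0) ->
  weight K2 m = weight K1 m.
Proof.
move=> leK mK; rewrite /weight (big_ord_widen K2 (fun v => v * m v) leK) [RHS]big_mkcond.
by apply: eq_bigr => v _; case: ltnP => // /mK ->; rewrite muln0.
Qed.

Lemma weight_move_part K a b m : a < K -> b < K -> 0 < m a ->
  weight K (move_part a b m) + a = weight K m + b.
Proof.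
move=> aK bK ma; have sum_delta c : c < K -> \sum_(v < K) v * (v == c :> nat) = c.
  move=> cK; rewrite (bigD1 (Ordinal cK)) //= eqxx muln1 big1 ?addn0 // => v.
  by move=> /negbTE; rewrite -val_eqE /= => ->; rewrite muln0.
rewrite -[X in _ + X = _](sum_delta a aK) -[X in _ = _ + X](sum_delta b bK).
rewrite /weight -!big_split /=.
apply: eq_bigr => v _; rewrite /move_part.
by case: (eqVneq (v : nat) a) => [->|]; case: (eqVneq (v : nat) b) => //= *; nia.
Qed.

Lemma move_partK a b m : 0 < m a -> move_part b a (move_part a b m) =1 m.
Proof.
by move=> ma v; rewrite /move_part; case: (eqVneq v a) => [->|]; case: eqVneq => //=; lia.
Qed.

Lemma eq_move_part a b m1 m2 : m1 =1 m2 -> move_part a b m1 =1 move_part a b m2.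
Proof. by move=> em v; rewrite /move_part em. Qed.

Lemma move_part_pos a b m u : 0 < move_part a b m u -> u = b \/ 0 < m u.
Proof. by rewrite /move_part; case: (eqVneq u b) => [|_]; [left | right; lia]. Qed.

Lemma eq_least_part m1 m2 s : m1 =1 m2 -> least_part m1 s -> least_part m2 s.
Proof. by move=> em [ms sP]; split=> [|u]; rewrite -!em //; apply: sP. Qed.

Lemma eq_greatest_part m1 m2 l : m1 =1 m2 -> greatest_part m1 l -> greatest_part m2 l.
Proof. by move=> em [ml lP]; split=> [|u]; rewrite -!em //; apply: lP. Qed.

Lemma eq_is_opart N m1 m2 (o1 o2 : nat -> bool) :
  m1 =1 m2 -> o1 =1 o2 -> is_opart N m1 o1 -> is_opart N m2 o2.
Proof.
move=> em eo [m0 mN wN oP]; split=> [|v|| v].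
- by rewrite -em.
- by rewrite -em; apply: mN.
- by rewrite -[RHS]wN /weight; apply: eq_bigr => v _; rewrite em.
- by rewrite -eo -em; apply: oP.
Qed.

Lemma is_opart_widen K N m (o : nat -> bool) :
  N < K -> m 0 = 0 -> (forall v, K <= v -> m v = 0) -> weight K m = N ->
  (forall v, o v -> 0 < m v) -> is_opart N m o.
Proof.
move=> NK m0 mK wN oP; have mN v : N < v -> m v = 0.
  move=> Nv; case: (ltnP v K) => [vK|/mK //]; apply/eqP; rewrite -leqn0.
  by have := leq_part_weight m vK; rewrite wN; nia.
by split=> //; rewrite -(weight_widen NK mN).
Qed.

Lemma is_opart_part_le N m o v : is_opart N m o -> 0 < m v -> v <= N.
Proof. by case=> _ mN _ _; case: (leqP v N) => // /mN ->. Qed.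

Lemma is_opart_mult_le N m o v : is_opart N m o -> m v <= N.
Proof.
move=> mo; have [m0 _ wN _] := mo; case: (posnP (m v)) => [-> //|mv].
have vN := is_opart_part_le mo mv; have := leq_part_weight m (vN : v < N.+1).
by rewrite wN; case: v mv {vN} => [|v]; [rewrite m0 | nia].
Qed.

Lemma least_part_gt0 N m (o : nat -> bool) s : is_opart N m o -> least_part m s -> 0 < s.
Proof. by case=> m0 _ _ _ [ms _]; case: s ms => [|//]; rewrite m0. Qed.

Lemma move_part_up N t m (o : nat -> bool) b s : 0 < t -> N <= t ->
  is_opart N m o -> least_part m s -> 1 < m s ->
  let m' := move_part s (s + t) m in
  [/\ is_opart (N + t) m' (fun v => o v || b && (v == s + t)),
      least_part m' s & greatest_part m' (s + t)].
Proof.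
move=> t_gt0 N_le_t mo sm m2s m'; have [m0 mN wN oP] := mo; have [ms sP] := sm.
have s_gt0 := least_part_gt0 mo sm.
have sN := is_opart_part_le mo ms.
have m's : 0 < m' s by rewrite /m' /move_part; lia.
have m'l : 0 < m' (s + t) by rewrite /m' /move_part; lia.
have m'P u : 0 < m' u -> u = s + t \/ (0 < m u /\ u <= N).
  by case/move_part_pos=> [|mu]; [left | right; split => //; exact: is_opart_part_le mo mu].
split; last 2 first.
- by split=> // u /m'P [->|[/sP]]; lia.
- by split=> // u /m'P [->|[_]]; lia.
apply: (@is_opart_widen (N + t).+1) => //.
- by rewrite /m' /move_part m0; lia.
- by move=> v Kv; rewrite /m' /move_part mN; lia.
- by apply/eqP; rewrite -(eqn_add2r s) weight_move_part ?(weight_widen _ mN) ?wN; lia.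
move=> v /orP [/oP mv|/andP [_ /eqP -> //]].
by rewrite /m' /move_part; case: (eqVneq v s) => [->|]; lia.
Qed.

Lemma move_part_down N t m (o : nat -> bool) s : 0 < t ->
  is_opart (N + t) m o -> least_part m s -> greatest_part m (s + t) ->
  let m' := move_part (s + t) s m in
  [/\ is_opart N m' (fun v => o v && (v != s + t)), least_part m' s & 1 < m' s].
Proof.
move=> t_gt0 mo sm [ml _] m'; have [m0 mN wN oP] := mo; have [ms sP] := sm.
have s_gt0 := least_part_gt0 mo sm.
have lN := is_opart_part_le mo ml.
have m's : m' s = m s + 1 by rewrite /m' /move_part eqxx; case: eqVneq; lia.
have m'P u : 0 < m' u -> u = s \/ 0 < m u by move/move_part_pos.
split; last 2 first.
- by split=> [|u /m'P [->|/sP //]]; lia.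
- by lia.
apply: (@is_opart_widen (N + t).+1) => //.
- by rewrite ltnS leq_addr.
- by rewrite /m' /move_part m0; lia.
- by move=> v Kv; rewrite /m' /move_part mN; lia.
- by apply/eqP; rewrite -(eqn_add2r (s + t)) weight_move_part ?wN; lia.
move=> v /andP [/oP mv vl]; rewrite /m' /move_part (negbTE vl); lia.
Qed.

Section Encoding.

Variable N : nat.
Implicit Types x y : opart N.

Definition mult x (v : nat) : nat := if v < N.+1 then x.1 (inord v) : nat else 0.

Definition over x (v : nat) : bool := (v < N.+1) && (inord v \in x.2).

Definition of_mult (m : nat -> nat) (o : nat -> bool) : opart N :=
  ([ffun v : 'I_N.+1 => inord (m v)], [set v : 'I_N.+1 | o v]).

Definition smallest_part x : nat := find (fun v => 0 < mult x v) (iota 0 N.+1).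

Lemma multE x (v : 'I_N.+1) : mult x v = x.1 v.
Proof. by rewrite /mult ltn_ord inord_val. Qed.

Lemma overE x (v : 'I_N.+1) : over x v = (v \in x.2).
Proof. by rewrite /over ltn_ord inord_val. Qed.

Lemma mult_part_le x v : 0 < mult x v -> v <= N.
Proof. by rewrite /mult; case: ifP. Qed.

Lemma opart_inj x y : mult x =1 mult y -> over x =1 over y -> x = y.
Proof.
case: x y => [f A] [g B] em eo; congr pair.
  by apply/ffunP => v; apply: val_inj; have := em v; rewrite !multE.
by apply/setP => v; have := eo v; rewrite !overE.
Qed.

Lemma is_overpartitionP x : is_overpartition x <-> is_opart N (mult x) (over x).
Proof.
have mult0 : mult x 0 = x.1 ord0 by rewrite -multE.
rewrite /is_overpartition /is_opart /weight.
rewrite (eq_bigr _ (fun v _ => congr1 _ (esym (multE x v)))).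
split=> [/and3P [/eqP x0 /eqP wN /forallP oP]|[m0 mN wN oP]].
  split=> // [|v vN|v /andP [vN vx]]; first by rewrite mult0 x0.
    by rewrite /mult ltnNge vN.
  by have := oP (inord v); rewrite vx /mult vN.
apply/and3P; split; first by apply/eqP/val_inj => /=; rewrite -mult0.
  exact/eqP.
by apply/forallP => v; apply/implyP; rewrite -overE -multE; apply: oP.
Qed.

Lemma is_smallestP x v : is_smallest x v <-> least_part (mult x) v.
Proof.
rewrite /is_smallest -multE; split=> [/andP [xv /forallP sP]|[xv sP]].
  split=> // u xu; have uN : u < N.+1 := mult_part_le xu.
  by have := sP (inord u); rewrite -multE inordK // xu.
by rewrite xv; apply/forallP => u; apply/implyP; rewrite -multE; apply: sP.
Qed.

Lemma is_largestP x v : is_largest x v <-> greatest_part (mult x) v.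
Proof.
rewrite /is_largest -multE; split=> [/andP [xv /forallP lP]|[xv lP]].
  split=> // u xu; have uN : u < N.+1 := mult_part_le xu.
  by have := lP (inord u); rewrite -multE inordK // xu.
by rewrite xv; apply/forallP => u; apply/implyP; rewrite -multE; apply: lP.
Qed.

Lemma mult_of_mult m o : is_opart N m o -> mult (of_mult m o) =1 m.
Proof.
move=> mo v; rewrite /mult; case: ltnP => [vN|Nv]; last by case: mo => _ -> .
by rewrite ffunE (inordK vN) inordK // ltnS (is_opart_mult_le _ mo).
Qed.

Lemma over_of_mult m o : is_opart N m o -> over (of_mult m o) =1 o.
Proof.
move=> [_ mN _ oP] v; rewrite /over inE; case: ltnP => [vN|Nv]; first by rewrite inordK.
by apply/esym/negP => /oP; rewrite mN.
Qed.

Lemma smallest_partE x s : least_part (mult x) s -> smallest_part x = s.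
Proof.
move=> [xs sP]; have sN : s < N.+1 := mult_part_le xs.
have has_pos : has (fun v => 0 < mult x v) (iota 0 N.+1).
  by apply/hasP; exists s; rewrite ?mem_iota.
have kN : smallest_part x < N.+1 by rewrite -[N.+1](size_iota 0) -has_find.
apply/eqP; rewrite eqn_leq; apply/andP; split.
  by rewrite leqNgt; apply/negP => /(before_find 0); rewrite nth_iota // xs.
by apply: sP; have := nth_find 0 has_pos; rewrite nth_iota.
Qed.

End Encoding.

Definition abar2_set (N : nat) : {set opart N} :=
  [set x : opart N | is_overpartition x && [exists v, is_smallest x v && (2 <= x.1 v)]].

Definition pbar_set (N t : nat) : {set opart N} :=
  [set y : opart N | is_overpartition y &&
     [exists s, exists l, [&& is_smallest y s, is_largest y l & (l - s == t)]]].

Lemma in_abar2_set N (x : opart N) : x \in abar2_set N <->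
  is_opart N (mult x) (over x) /\ exists2 s, least_part (mult x) s & 1 < mult x s.
Proof.
rewrite inE; split=> [/andP [/is_overpartitionP xo /existsP [v /andP [/is_smallestP xv]]]|].
  by rewrite -multE => x2v; split=> //; exists v.
case=> /is_overpartitionP xo [s xs x2s]; rewrite xo; apply/existsP.
have sN : s < N.+1 := mult_part_le xs.1.
by exists (inord s); rewrite -multE inordK // x2s andbT; apply/is_smallestP; rewrite inordK.
Qed.

Lemma in_pbar_set N t (y : opart N) : y \in pbar_set N t <->
  is_opart N (mult y) (over y) /\
  exists2 s, least_part (mult y) s & greatest_part (mult y) (s + t).
Proof.
rewrite inE; split=> [/andP [/is_overpartitionP yo /existsP [s /existsP [l]]]|].
  case/and3P=> /is_smallestP ys /is_largestP yl /eqP lst; split=> //; exists s => //.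
  by have sl := ys.2 _ yl.1; rewrite -lst subnKC.
case=> /is_overpartitionP yo [s ys yl]; rewrite yo; apply/existsP.
have sN : s < N.+1 := mult_part_le ys.1; have lN : s + t < N.+1 := mult_part_le yl.1.
exists (inord s); apply/existsP; exists (inord (s + t)).
rewrite !inordK // addKn eqxx andbT.
by apply/andP; split; [apply/is_smallestP | apply/is_largestP]; rewrite inordK.
Qed.

Section Bijection.

Variables N t : nat.
Hypotheses (t_gt0 : 0 < t) (N_le_t : N <= t).

Definition raise (p : opart N * bool) : opart (N + t) :=
  let s := smallest_part p.1 in
  of_mult (N + t) (move_part s (s + t) (mult p.1))
    (fun v => over p.1 v || p.2 && (v == s + t)).

Definition lower (y : opart (N + t)) : opart N * bool :=
  let s := smallest_part y in
  (of_mult N (move_part (s + t) s (mult y)) (fun v => over y v && (v != s + t)),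
   over y (s + t)).

Lemma raise_spec x b : x \in abar2_set N ->
  let s := smallest_part x in let y := raise (x, b) in
  [/\ y \in pbar_set (N + t) t, smallest_part y = s,
       mult y =1 move_part s (s + t) (mult x)
     & over y =1 (fun v => over x v || b && (v == s + t))].
Proof.
case/in_abar2_set => xo [s xs x2s]; rewrite /raise /= (smallest_partE xs).
have [yo ys yl] := move_part_up b t_gt0 N_le_t xo xs x2s.
have ym := mult_of_mult yo; have yov := over_of_mult yo.
have ys' := eq_least_part (fsym ym) ys.
split=> //; last exact: smallest_partE ys'.
apply/in_pbar_set; split; first exact: eq_is_opart (fsym ym) (fsym yov) yo.
by exists s => //; apply: eq_greatest_part (fsym ym) yl.
Qed.

Lemma lower_spec y : y \in pbar_set (N + t) t ->
  let s := smallest_part y in let x := (lower y).1 in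
  [/\ x \in abar2_set N, smallest_part x = s,
       mult x =1 move_part (s + t) s (mult y)
     & over x =1 (fun v => over y v && (v != s + t))].
Proof.
case/in_pbar_set => yo [s ys yl]; rewrite /lower /= (smallest_partE ys).
have [xo xs x2s] := move_part_down t_gt0 yo ys yl.
have xm := mult_of_mult xo; have xov := over_of_mult xo.
have xs' := eq_least_part (fsym xm) xs.
split=> //; last exact: smallest_partE xs'.
apply/in_abar2_set; split; first exact: eq_is_opart (fsym xm) (fsym xov) xo.
by exists s; rewrite ?xm.
Qed.

Lemma lower_raise x b : x \in abar2_set N -> lower (raise (x, b)) = (x, b).
Proof.
move=> xA; have [yB ys ym yo] := raise_spec b xA; have [_ _ xm xo] := lower_spec yB.
have /in_abar2_set [xop [s xs _]] := xA; rewrite (smallest_partE xs) in ys ym yo.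
have over_ltn v : over x v -> v < s + t.
  have [_ _ _ oP] := xop; move/oP/(is_opart_part_le xop).
  by have := least_part_gt0 xop xs; lia.
have x_s_t : over x (s + t) = false by apply/negP => /over_ltn; rewrite ltnn.
rewrite [lower _]surjective_pairing; congr pair; last first.
  by rewrite /= ys yo eqxx x_s_t andbT.
apply: opart_inj => v; first by rewrite xm ys (eq_move_part _ _ ym) move_partK //; case: xs.
rewrite xo ys yo; case: (eqVneq v (s + t)) => [->|_]; first by rewrite andbF x_s_t.
by rewrite andbF orbF andbT.
Qed.

Lemma raise_lower y : y \in pbar_set (N + t) t -> raise (lower y) = y.
Proof.
move=> yB; have [xA xs xm xo] := lower_spec yB.
have [_ zs zm zo] := raise_spec (over y (smallest_part y + t)) xA.
have -> : lower y = ((lower y).1, over y (smallest_part y + t)) := surjective_pairing _.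
have /in_pbar_set [_ [s ys yl]] := yB; rewrite xs (smallest_partE ys) in xm xo zm zo *.
apply: opart_inj => v; first by rewrite zm (eq_move_part _ _ xm) move_partK //; case: yl.
by rewrite zo xo; case: (eqVneq v (s + t)) => [->|_] /=; rewrite ?andbF ?andbT ?orbF.
Qed.

Lemma abar2_pbar_shift : 2 * abar2 N = pbar (N + t) t.
Proof.
have -> : 2 = #|[set: bool]| by rewrite cardsT card_bool.
rewrite mulnC -cardsX; apply: (card_in_bij (f := raise) (g := lower)) => [[x b]|y].
  rewrite in_setX in_setT andbT => xA.
  by have [yB _ _ _] := raise_spec b xA; rewrite lower_raise.
by move=> yB; have [xA _ _ _] := lower_spec yB; rewrite raise_lower // in_setX in_setT xA.
Qed.

End Bijection.

Theorem theorem5p2 (n : nat) : 1 <= n -> 2 * abar2 n = pbar (2 * n) n.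
Proof. by move=> n_gt0; rewrite [2 * n]mul2n -addnn; apply: abar2_pbar_shift. Qed.
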